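(* Let $F$ be a minimally unsatisfiable clause-set and $\vec{v} = (v_1,\dots,v_n)$, $n\ge 2$, a singular tuple for $F$ with singularity-degree tuple $(m_1,\dots,m_n)$. Let $i \in \{1,\dots,n-1\}$, let $\pi$ be the permutation of $\{1,\dots,n\}$ exchanging $i$ and $i+1$ and fixing all other elements, and let $\vec{v}' := (v_{\pi(1)},\dots,v_{\pi(n)})$. When $\vec{v}'$ is a singular tuple for $F$ (i.e., $\pi$ is singularity-preserving), let $(m_1',\dots,m_n')$ be its singularity-degree tuple. Then: 1. If $\pi$ is singularity-preserving, then $m_j' = m_j$ for all $j \in \{1,\dots,n\}\setminus\{i,i+1\}$. 2. Assume $m_i \ge 2$. Then (a) $\pi$ is singularity-preserving; (b) $m_i' \le m_{i+1}+1$; (c) $m_{i+1}' \ge m_i - 1$; (d) if $m_{i+1}=1$ then $m_i' = 1$; (e) if $m_{i+1}\ge 2$ then $m_{i+1}' \ge 2$. 3. Assume $m_i = 1$. (a) If $m_{i+1} = 1$, then $\pi$ is singularity-preserving, $m_{i+1}' = 1$ and $m_i' \in \{1,2\}$. (b) If $m_{i+1} \ge 2$, then $\pi$ is singularity-preserving if and only if $v_{i+1}$ is singular for $\mathrm{DP}_{v_1,\dots,v_{i-1}}(F)$; and if $\pi$ is singularity-preserving then $m_i' \ge 2$.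
   Context: Literals are variables $v$ and complements $\overline{v}$; a clause is a finite set of literals with no complementary pair; a clause-set is a finite set of clauses; $\mathrm{ldeg}_F(x)$ is the number of clauses of $F$ containing literal $x$, and $\mathrm{vdeg}_F(v)=\mathrm{ldeg}_F(v)+\mathrm{ldeg}_F(\overline{v})$. $\mathrm{DP}_v(F) := \{C \in F : v \notin \mathrm{var}(C)\} \cup \{(C \cup D)\setminus\{v,\overline{v}\} : C, D \in F,\ C \cap \overline{D} = \{v\}\}$, and $\mathrm{DP}_{v_1,\dots,v_k}(F)$ is the result of applying $\mathrm{DP}_{v_1},\dots,\mathrm{DP}_{v_k}$ in this order ($F$ itself if $k=0$). A variable $v$ is singular for $F$ if $\min(\mathrm{ldeg}_F(v),\mathrm{ldeg}_F(\overline{v}))=1$, and $m$-singular ($m\ge1$) if moreover $\mathrm{vdeg}_F(v)-1=m$. For a minimally unsatisfiable $F$, a tuple $(v_1,\dots,v_n)$ is a singular tuple for $F$ if each $v_i$ is singular for $\mathrm{DP}_{v_1,\dots,v_{i-1}}(F)$; its singularity-degree tuple is $(m_1,\dots,m_n)$ where $v_i$ is $m_i$-singular for $\mathrm{DP}_{v_1,\dots,v_{i-1}}(F)$. A permutation $\pi$ is singularity-preserving for $F$ and $(v_1,\dots,v_n)$ if $(v_{\pi(1)},\dots,v_{\pi(n)})$ is also a singular tuple for $F$. *)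

From mathcomp Require Import all_boot.
From mathcomp Require Import finmap.
Set Implicit Arguments. Unset Strict Implicit. Unset Printing Implicit Defensive.
Local Open Scope fset_scope.

(* Variables are natural numbers; a literal is (variable, polarity):
   (v, true) is the positive literal v, (v, false) is its complement. *)
Definition var := nat.
Definition lit := (nat * bool)%type.
Definition pos (v : var) : lit := (v, true).
Definition compl (x : lit) : lit := (x.1, ~~ x.2).

Definition clause := {fset lit}.
Definition cls := {fset clause}.

Definition is_clause (C : clause) : bool := [forall x : C, compl (val x) \notin C].
Definition is_clause_set (F : cls) : bool := [forall C : F, is_clause (val C)].

Definition vars_of (C : clause) : {fset var} := [fset x.1 | x in C].
Definition compl_clause (C : clause) : clause := [fset compl x | x in C].

Definition sat_clause (f : var -> bool) (C : clause) : Prop :=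
  exists2 x, x \in C & f x.1 = x.2.
Definition satisfiable (F : cls) : Prop :=
  exists f : var -> bool, forall C, C \in F -> sat_clause f C.

Definition MU (F : cls) : Prop :=
  is_clause_set F /\ ~ satisfiable F /\
  (forall G : cls, G `<` F -> satisfiable G).

Definition ldeg (F : cls) (x : lit) : nat := #|` [fset C in F | x \in C]|.
Definition vdeg (F : cls) (v : var) : nat := ldeg F (pos v) + ldeg F (compl (pos v)).

Definition DP (v : var) (F : cls) : cls :=
  [fset C in F | v \notin vars_of C] `|`
  [fset ((C `|` D) `\` [fset pos v; compl (pos v)]) | C in F, D in F
     & (C `&` compl_clause D == [fset pos v])].

(* DP_{v_1,...,v_k}(F), applied in this order *)
Definition DPs (s : seq var) (F : cls) : cls := foldl (fun G v => DP v G) F s.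

Definition singular (F : cls) (v : var) : bool :=
  minn (ldeg F (pos v)) (ldeg F (compl (pos v))) == 1.
Definition m_singular (F : cls) (m : nat) (v : var) : bool :=
  (0 < m) && singular F v && (vdeg F v - 1 == m).

(* singular tuples (0-based indices) *)
Definition singular_tuple (F : cls) (s : seq var) : Prop :=
  forall i, i < size s -> singular (DPs (take i s) F) (nth 0 s i).

(* singularity-degree tuple: the j-th entry is the m with v_j m-singular
   for DP_{v_1..v_{j-1}}(F) *)
Definition sdeg (F : cls) (s : seq var) (j : nat) : nat :=
  vdeg (DPs (take j s) F) (nth 0 s j) - 1.

(* the transposition of i and i+1 on indices (0-based) *)
Definition swap_idx (i j : nat) : nat :=
  if j == i then i.+1 else if j == i.+1 then i else j.

Definition permute (pi : nat -> nat) (s : seq var) : seq var :=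
  mkseq (fun j => nth 0 s (pi j)) (size s).

Definition sing_preserving (F : cls) (s : seq var) (pi : nat -> nat) : Prop :=
  singular_tuple F (permute pi s).

(* Write G := DP_{v_1,...,v_(i-1)}(F), which is again minimally unsatisfiable, a := v_i and
   b := v_(i+1), and let x be a literal of a that occurs in exactly one clause C0 of G.  Minimal
   unsatisfiability forces C0 to clash with every clause D containing the complement of x in x
   alone, so DP_a(G) consists of the clauses of G without a together with the resolvents of C0
   with these D, which are pairwise distinct, new, and never tautological.  Hence the degree of a
   literal z over another variable is unchanged by DP_a if z is not in C0, and otherwise becomes
   the number of clauses of G containing z but not a, plus ldeg_G(complement of x).  Applying this
   count to the reductions by a and by b in both orders yields all the relations between
   m_i, m_(i+1), m'_i and m'_(i+1); the other degrees are unaffected because DP-reduction on two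
   distinct singular variables commutes. *)

From mathcomp Require Import all_boot finmap zify.
Set Implicit Arguments. Unset Strict Implicit. Unset Printing Implicit Defensive.
Local Open Scope fset_scope.
Local Open Scope nat_scope.

Lemma complK : involutive compl.
Proof. by case=> v b; rewrite /compl /= negbK. Qed.

Lemma compl_inj : injective compl.
Proof. exact: can_inj complK. Qed.

Lemma compl_neq (x : lit) : (compl x == x) = false.
Proof. by case: x => v []; rewrite /compl /= xpair_eqE eqxx. Qed.

Lemma neq_compl (x : lit) : (x == compl x) = false.
Proof. by rewrite eq_sym compl_neq. Qed.

Lemma lit_var_eq (l x : lit) : l.1 = x.1 -> l = x \/ l = compl x.
Proof. by case: l x => w b [u c] /= ->; case: b c => -[]; [left|right|right|left]. Qed.

Lemma var_neq_lit (l x : lit) :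
  l.1 != x.1 -> (l == x) = false /\ (l == compl x) = false.
Proof. by move=> lx; split; apply/negbTE; apply: contra lx => /eqP ->. Qed.

Lemma in_compl_clause (D : clause) x : (x \in compl_clause D) = (compl x \in D).
Proof.
apply/imfsetP/idP => [[y /= yD ->]|xD]; first by rewrite complK.
by exists (compl x); rewrite ?complK.
Qed.

Lemma vars_ofP (C : clause) (x : lit) :
  reflect (x \in C \/ compl x \in C) (x.1 \in vars_of C).
Proof.
apply: (iffP idP) => [/imfsetP [l /= lC lx]|[xC|xC]]; try apply/imfsetP.
- by case: (lit_var_eq (esym lx)) => El; [left|right]; rewrite -El.
- by exists x.
- by exists (compl x).
Qed.

Lemma is_clauseP (C : clause) :
  reflect (forall l, l \in C -> compl l \notin C) (is_clause C).
Proof.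
by apply: (iffP forallP) => [H l lC | H [l lC]] /=; [exact: (H [` lC]) | exact: H].
Qed.

Lemma is_clause_setP (F : cls) :
  reflect (forall C, C \in F -> is_clause C) (is_clause_set F).
Proof.
by apply: (iffP forallP) => [H C CF | H [C CF]] /=; [exact: (H [` CF]) | exact: H].
Qed.

Lemma clause_compl (C : clause) l : is_clause C -> l \in C -> (compl l \in C) = false.
Proof. by move=> /is_clauseP cC /cC /negbTE. Qed.

Lemma clause_sub (A B : clause) : A `<=` B -> is_clause B -> is_clause A.
Proof.
move=> /fsubsetP AB /is_clauseP cB; apply/is_clauseP => l /AB lB.
by apply: contra (cB _ lB); apply: AB.
Qed.

Lemma clause_fsetU1 (C : clause) l :
  is_clause C -> l.1 \notin vars_of C -> is_clause (l |` C).
Proof.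
move=> /is_clauseP cC lC; apply/is_clauseP => k; rewrite !inE negb_or.
case/orP => [/eqP ->|kC]; rewrite ?compl_neq /=.
  by apply: contra lC => ?; apply/vars_ofP; right.
rewrite cC // andbT; apply: contra lC => /eqP El.
by apply/vars_ofP; right; rewrite -El complK.
Qed.

Definition res (x : lit) (C D : clause) : clause := (C `|` D) `\` [fset x; compl x].

Lemma resC x C D : res (compl x) D C = res x C D.
Proof. by rewrite /res fsetUC complK [[fset compl x; x]]fsetUC. Qed.

Lemma res_clauseE (C D : clause) x :
  is_clause C -> is_clause D -> x \in C -> compl x \in D ->
  (C `&` compl_clause D == [fset x]) = is_clause (res x C D).
Proof.
move=> cC cD xC xD; have /is_clauseP cC' := cC; have /is_clauseP cD' := cD.
apply/eqP/idP => [clash|cR].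
  apply/is_clauseP => l; rewrite !inE !negb_or -!andbA => /and3P [lx lxc lCD].
  apply/negP => /and3P [clx clxc clCD].
  have only_x k : k \in C -> compl k \in D -> k = x.
    by move=> kC kD; apply/fset1P; rewrite -clash inE kC in_compl_clause.
  case/orP: lCD => lX; case/orP: clCD => clX.
  - by move: (cC' _ lX); rewrite clX.
  - by move: lx; rewrite (only_x _ lX clX) eqxx.
  - by move: clx; rewrite (only_x (compl l)) ?complK ?eqxx.
  - by move: (cD' _ lX); rewrite clX.
apply/fsetP => l; rewrite !inE in_compl_clause.
have [->|lx] := eqVneq l x; first by rewrite xC xD.
apply/negbTE/negP => /andP [lC lD].
have lxc : l != compl x by apply: contraNneq (cC' _ xC) => <-.
have := is_clauseP _ cR l; rewrite !inE (negbTE lx) (negbTE lxc) lC /=.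
rewrite (can2_eq complK complK) (inj_eq compl_inj) (negbTE lx) (negbTE lxc) lD orbT.
by move/(_ isT).
Qed.

Lemma mem_res_var z x C D : z.1 != x.1 -> (z \in res x C D) = (z \in C) || (z \in D).
Proof. by case/var_neq_lit => zx zxc; rewrite !inE zx zxc. Qed.

Lemma res_novar x C D : x.1 \notin vars_of (res x C D).
Proof. by apply/vars_ofP; rewrite !inE !eqxx orbT; case. Qed.

Lemma novar_res v x C D :
  v \notin vars_of C -> v \notin vars_of D -> v \notin vars_of (res x C D).
Proof.
move=> vC vD; apply/negP => /imfsetP [l /=]; rewrite !inE => /andP [_ lCD] lv.
by case/orP: lCD => lX; [case/negP: vC | case/negP: vD]; rewrite lv; apply/imfsetP; exists l.
Qed.

Lemma novar_resl v x C D : v \notin vars_of (res x C D) -> v != x.1 -> v \notin vars_of C.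
Proof.
move=> vR vx; apply: contra vR => /imfsetP [l /= lC lv]; apply/imfsetP; exists l => //.
by rewrite lv in vx; have [h1 h2] := var_neq_lit vx; rewrite /res !inE h1 h2 lC.
Qed.

Lemma novar_resr v x C D : v \notin vars_of (res x C D) -> v != x.1 -> v \notin vars_of D.
Proof. by rewrite -resC; apply: novar_resl. Qed.

Lemma DP_memE (H : cls) (x : lit) R : is_clause_set H ->
  R \in DP x.1 H <->
  (R \in H /\ x.1 \notin vars_of R) \/
  exists C D, [/\ C \in H, D \in H, x \in C, compl x \in D & is_clause (res x C D)]
              /\ R = res x C D.
Proof.
move=> /is_clause_setP cH.
have posE v : R \in DP v H <-> (R \in H /\ v \notin vars_of R) \/
    exists C D, [/\ C \in H, D \in H, pos v \in C, compl (pos v) \in D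
                  & is_clause (res (pos v) C D)] /\ R = res (pos v) C D.
  rewrite /DP !inE; split.
  - case/orP => [/andP [RH Rv]|/imfset2P [C CH [D]]]; first by left.
    rewrite !inE /= => /andP [DH clash] ->; right; exists C, D.
    have xCD : pos v \in C `&` compl_clause D by rewrite (eqP clash) inE.
    move: xCD; rewrite inE in_compl_clause => /andP [xC xD].
    by rewrite -res_clauseE // cH.
  - case=> [[RH Rv]|[C [D [[CH DH xC xD cR] ER]]]]; first by apply/orP; left; apply/andP.
    rewrite ER; apply/orP; right; apply/imfset2P; exists C => //; exists D => //.
    by rewrite !inE DH res_clauseE // cH.
case: x => v [] /=; first exact: posE.
have negE C D : res (v, false) D C = res (pos v) C D := resC (pos v) C D.
rewrite posE; split; case=> [?|[C [D [[CH DH xC xD cR] ->]]]]; try by left.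
- by right; exists D, C; rewrite negE.
- by right; exists D, C; rewrite -negE.
Qed.

Lemma DP_kept (H : cls) v C : C \in H -> v \notin vars_of C -> C \in DP v H.
Proof. by move=> CH Cv; rewrite /DP !inE CH Cv. Qed.

Lemma DP_res (H : cls) x C D : is_clause_set H -> C \in H -> D \in H ->
  x \in C -> compl x \in D -> is_clause (res x C D) -> res x C D \in DP x.1 H.
Proof. by move=> cH CH DH xC xD cR; apply/DP_memE => //; right; exists C, D. Qed.

Lemma DP_novar (H : cls) v R : is_clause_set H -> R \in DP v H -> v \notin vars_of R.
Proof.
move=> cH; rewrite -[v]/((pos v).1) DP_memE //.
by case=> [[]|[C [D [_ ->]]]] //; apply: res_novar.
Qed.

Lemma DP_clause_set (H : cls) v : is_clause_set H -> is_clause_set (DP v H).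
Proof.
move=> cH; apply/is_clause_setP => R; rewrite -[v]/((pos v).1) DP_memE //.
by case=> [[RH _]|[C [D [[_ _ _ _ cR] ->]]]] //; apply: (elimT (is_clause_setP _) cH).
Qed.

Definition sole_clause (G : cls) (x : lit) (C0 : clause) : Prop :=
  [/\ C0 \in G, x \in C0 & forall E, E \in G -> x \in E -> E = C0].

Lemma ldeg_eq1 (G : cls) x : ldeg G x = 1 -> exists C0, sole_clause G x C0.
Proof.
move=> /eqP/cardfs1P [C0 E]; have : C0 \in [fset C in G | x \in C] by rewrite E inE.
rewrite !inE => /andP [C0G xC0]; exists C0; split => // D DG xD.
by apply/fset1P; rewrite -E !inE DG.
Qed.

Lemma DP_sole_inv (H : cls) y C E : is_clause_set H -> sole_clause H y C ->
  E \in DP y.1 H ->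
  (E \in H /\ y.1 \notin vars_of E) \/
  exists2 D, D \in H /\ compl y \in D & E = res y C D /\ is_clause E.
Proof.
move=> cH Cy /(DP_memE _ _ cH) [|[C' [D [[C'H DH yC' yD cE] ->]]]]; first by left.
have EC : C' = C by case: Cy => _ _; apply.
by subst C'; right; exists D.
Qed.

Definition upd (f : var -> bool) v b : var -> bool := fun w => if w == v then b else f w.

Lemma sat_upd f v b C : sat_clause f C -> v \notin vars_of C -> sat_clause (upd f v b) C.
Proof.
case=> l lC fl vC; exists l => //; rewrite /upd; case: eqP => // lv.
by move: vC; rewrite -lv; case/vars_ofP; left.
Qed.

Lemma sat_upd_lit f (l : lit) C : l \in C -> sat_clause (upd f l.1 l.2) C.
Proof. by exists l; rewrite // /upd eqxx. Qed.

Lemma sat_upd_var f (l : lit) v b C :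
  l \in C -> f l.1 = l.2 -> l.1 != v -> sat_clause (upd f v b) C.
Proof. by move=> lC fl lv; exists l; rewrite // /upd (negbTE lv). Qed.

Lemma MU_critical (G : cls) E : MU G -> E \in G ->
  exists f, (forall C, C \in G -> C != E -> sat_clause f C) /\
            (forall l, l \in E -> f l.1 != l.2).
Proof.
move=> [_ [unsatG minG]] EG; have [f satf] := minG _ (fproperD1 EG).
have satE C : C \in G -> C != E -> sat_clause f C.
  by move=> CG CE; apply: satf; rewrite !inE CE.
exists f; split => // l lE; apply/eqP => fl; apply: unsatG; exists f => C CG.
by have [->|] := eqVneq C E; [exists l | exact: satE].
Qed.

Lemma MU_no_pure (G : cls) z : MU G -> 0 < ldeg G z -> 0 < ldeg G (compl z).
Proof.
move=> MG; rewrite /ldeg cardfs_gt0 => /fset0Pn [C]; rewrite !inE => /andP [CG zC].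
rewrite lt0n; apply/negP => /eqP/cardfs0_eq noD; apply: (proj1 (proj2 MG)).
have [f [satf _]] := MU_critical MG CG.
exists (upd f z.1 z.2) => D DG; have [->|DC] := eqVneq D C; first exact: sat_upd_lit.
have [l lD fl] := satf _ DG DC; have [lz|lz] := eqVneq l.1 z.1; last exact: sat_upd_var fl lz.
case: (lit_var_eq lz) => El; first by rewrite -El in lD *; apply: sat_upd_lit.
by have : D \in fset0 by rewrite -noD !inE DG -El.
Qed.

Lemma false_compl (f : var -> bool) (x : lit) : f x.1 != (compl x).2 -> f x.1 = x.2.
Proof. by case: x => v [] /=; case: (f v). Qed.

Lemma sat_res f (C D : clause) x : is_clause C -> is_clause D ->
  x \in C -> compl x \in D -> sat_clause f C -> sat_clause f D -> sat_clause f (res x C D).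
Proof.
move=> cC cD xC xD [l lC fl] [k kD fk].
have in_res m : m \in C `|` D -> m.1 != x.1 -> m \in res x C D.
  by move=> mCD /var_neq_lit [mx mxc]; rewrite /res in_fsetD mCD !inE mx mxc.
have [lx|lx] := eqVneq l.1 x.1; last by exists l; rewrite ?in_res ?inE ?lC.
have [kx|kx] := eqVneq k.1 x.1; last by exists k; rewrite ?in_res ?inE ?kD ?orbT.
case: (lit_var_eq lx) => El; last by rewrite El (clause_compl cC xC) in lC.
case: (lit_var_eq kx) => Ek; first by rewrite Ek -[x]complK (clause_compl cD xD) in kD.
by move: fk; rewrite Ek /= -lx fl El; case: (x.2).
Qed.

Lemma sat_res_r f (C D : clause) x : is_clause D -> compl x \in D -> f x.1 = x.2 ->
  sat_clause f D -> sat_clause f (res x C D).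
Proof.
move=> cD xD fx [l lD fl]; exists l => //.
have lxc : l != compl x by apply/eqP => El; move: fl; rewrite El /= fx; case: (x.2).
have lx : l != x by apply: contraTneq lD => ->; move: (is_clauseP _ cD _ xD); rewrite complK.
by rewrite !inE (negbTE lx) (negbTE lxc) lD orbT.
Qed.

Lemma cardfsU_disjoint (T : choiceType) (A B : {fset T}) :
  [disjoint A & B] -> #|` A `|` B| = #|` A| + #|` B|.
Proof. by move=> /eqP AB; rewrite -cardfsUI AB cardfs0 addn0. Qed.

Lemma mem_fset_in (H : cls) (P : pred clause) E : (E \in [fset C in H | P C]) = (E \in H) && P E.
Proof. by rewrite !inE. Qed.

Definition ldeg_with (H : cls) (z w : lit) : nat := #|` [fset C in H | (z \in C) && (w \in C)]|.
Definition ldeg_off (H : cls) (v : var) (z : lit) : nat :=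
  #|` [fset C in H | (z \in C) && (v \notin vars_of C)]|.

Lemma ldeg_with_le (H : cls) z w : ldeg_with H z w <= ldeg H w.
Proof. by apply: fsubset_leq_card; apply/fsubsetP => C; rewrite !inE => /and3P [-> _ ->]. Qed.

Lemma ldeg_with_gt0 (H : cls) z w :
  0 < ldeg_with H z w -> exists2 C, C \in H & (z \in C) && (w \in C).
Proof. by rewrite cardfs_gt0 => /fset0Pn [C]; rewrite !inE => /andP [CH zwC]; exists C. Qed.

Lemma ldeg_split (H : cls) x z : is_clause_set H ->
  ldeg H z = ldeg_off H x.1 z + ldeg_with H z x + ldeg_with H z (compl x).
Proof.
move=> /is_clause_setP cH; rewrite /ldeg /ldeg_off /ldeg_with -!cardfsU_disjoint; last 2 first.
- apply/fdisjointP => C; rewrite !inE => /orP [/and3P [_ _ Cx]|/and3P [CH _ xC]];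
    apply/negP => /and3P [_ _ xC'].
  + by case/negP: Cx; apply/vars_ofP; right.
  + by rewrite (clause_compl (cH _ CH) xC) in xC'.
- apply/fdisjointP => C; rewrite !inE => /and3P [_ _ Cx].
  by apply/negP => /and3P [_ _ xC]; case/negP: Cx; apply/vars_ofP; left.
congr (#|` _|); apply/fsetP => C; rewrite !inE.
case: (C \in H) (z \in C) => [] [] //=; case: (boolP (x.1 \in vars_of C)) => //= /vars_ofP.
by case=> ->; rewrite ?orbT.
Qed.

(** * DP-reduction on a singular variable *)

Section SoleClause.

Variables (G : cls) (x : lit) (C0 : clause).
Hypotheses (MG : MU G) (C0x : sole_clause G x C0).

Let C0G : C0 \in G. Proof. by case: C0x. Qed.
Let xC0 : x \in C0. Proof. by case: C0x. Qed.
Let C0_uniq : forall E, E \in G -> x \in E -> E = C0. Proof. by case: C0x. Qed.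

Let cG : forall C, C \in G -> is_clause C := elimT (is_clause_setP G) (proj1 MG).

Lemma compl_notin_sole : (compl x \in C0) = false.
Proof. exact: clause_compl (cG C0G) xC0. Qed.

Lemma var_sole_clause l : l \in C0 -> l != x -> l.1 != x.1.
Proof.
move=> lC0 lx; apply/eqP => /lit_var_eq [El|El]; first by rewrite El eqxx in lx.
by rewrite El compl_notin_sole in lC0.
Qed.

Lemma critical_falsifies_sole D : D \in G -> compl x \in D ->
  exists f, [/\ forall C, C \in G -> C != D -> sat_clause f C,
     forall l, l \in D -> f l.1 != l.2,
     forall l, l \in C0 -> l != x -> f l.1 != l.2 & f x.1 = x.2].
Proof.
move=> DG xD; have [f [satf falseD]] := MU_critical MG DG.
have fx : f x.1 = x.2 by apply: false_compl; apply: falseD.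
(* If another literal of [C0] were true, flipping [x] would satisfy all of [G]. *)
exists f; split => // l lC0 lx; apply/eqP => fl; apply: (proj1 (proj2 MG)).
exists (upd f x.1 (~~ x.2)) => C CG; have [->|CD] := eqVneq C D.
  exact: (sat_upd_lit _ xD).
have [k kC fk] := satf _ CG CD; have [kx|kx] := eqVneq k.1 x.1.
  case: (lit_var_eq kx) => Ek; last by rewrite Ek /= fx in fk; case: (x.2) fk.
  have -> : C = C0 by apply: C0_uniq; rewrite -?Ek.
  exact: sat_upd_var lC0 fl (var_sole_clause lC0 lx).
exact: sat_upd_var fk kx.
Qed.

Lemma clash_sole D w : D \in G -> compl x \in D -> w \in C0 -> compl w \in D -> w = x.
Proof.
move=> DG xD wC0 wD; have [f [_ falseD falseC0 _]] := critical_falsifies_sole DG xD.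
apply/eqP; apply: contraT => wx; move: (falseC0 _ wC0 wx) (falseD _ wD).
by case: w {wC0 wD wx} => v [] /=; case: (f v).
Qed.

Lemma res_sole_clause D : D \in G -> compl x \in D -> is_clause (res x C0 D).
Proof.
move=> DG xD; rewrite -res_clauseE ?cG //; apply/eqP/fsetP => l.
rewrite !inE in_compl_clause; apply/andP/eqP => [[lC0 lD]|->]; last by [].
exact: clash_sole lD.
Qed.

Lemma res_sole_DP D : D \in G -> compl x \in D -> res x C0 D \in DP x.1 G.
Proof. by move=> DG xD; apply: DP_res (proj1 MG) _ _ _ _ (res_sole_clause DG xD). Qed.

Lemma critical_falsifies_res D : D \in G -> compl x \in D ->
  exists f, [/\ forall C, C \in G -> C != D -> sat_clause f C,
    forall l, l \in res x C0 D -> f l.1 != l.2 & f x.1 = x.2].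
Proof.
move=> DG xD; have [f [satf falseD falseC0 fx]] := critical_falsifies_sole DG xD.
exists f; split => // l; rewrite !inE negb_or -andbA => /and3P [lx _ /orP [lC0|lD]].
- exact: falseC0.
- exact: falseD.
Qed.

Lemma res_sole_notin D : D \in G -> compl x \in D -> res x C0 D \notin G.
Proof.
move=> DG xD; apply/negP => RG; have [f [satf falseR _]] := critical_falsifies_res DG xD.
have RD : res x C0 D != D by apply: contraTneq xD => <-; rewrite !inE eqxx orbT.
have [l lR fl] := satf _ RG RD; by move: (falseR _ lR); rewrite fl eqxx.
Qed.

Lemma res_sole_inj D D' : D \in G -> compl x \in D -> D' \in G -> compl x \in D' ->
  res x C0 D' = res x C0 D -> D' = D.
Proof.
move=> DG xD D'G xD' eqR; apply/eqP; apply: contraT => D'D.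
have [f [satf falseR fx]] := critical_falsifies_res DG xD.
have [l lR fl] := sat_res_r C0 (cG D'G) xD' fx (satf _ D'G D'D).
by move: lR; rewrite eqR => /falseR; rewrite fl eqxx.
Qed.

Lemma var_sole_cases C : C \in G -> x.1 \in vars_of C -> C = C0 \/ compl x \in C.
Proof. by move=> CG /vars_ofP [/(C0_uniq CG)|]; [left|right]. Qed.

Lemma DP_sole_unsat : ~ satisfiable (DP x.1 G).
Proof.
case=> f satf; apply: (proj1 (proj2 MG)).
have sat_kept b C : C \in G -> x.1 \notin vars_of C -> sat_clause (upd f x.1 b) C.
  by move=> CG Cx; apply: sat_upd (satf _ (DP_kept CG Cx)) Cx.
(* Make [x] false if [C0] is satisfied without it, and true otherwise. *)
case: (boolP [exists l : C0, (val l != x) && (f (val l).1 == (val l).2)]).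
- case/existsP => -[l lC0] /= /andP [lx /eqP fl].
  exists (upd f x.1 (~~ x.2)) => C CG; have [Cx|Cx] := boolP (x.1 \in vars_of C).
    case: (var_sole_cases CG Cx) => [->|xC]; last exact: (sat_upd_lit _ xC).
    exact: sat_upd_var lC0 fl (var_sole_clause lC0 lx).
  exact: sat_kept.
- move=> /existsPn noC0; exists (upd f x.1 x.2) => C CG.
  have [Cx|Cx] := boolP (x.1 \in vars_of C); last exact: sat_kept.
  case: (var_sole_cases CG Cx) => [->|xC]; first exact: sat_upd_lit.
  have [l] := satf _ (res_sole_DP CG xC).
  rewrite !inE negb_or -andbA => /and3P [lx lxc /orP [lC0|lC]] fl.
    by move: (noC0 [` lC0]); rewrite /= lx fl eqxx.
  apply: sat_upd_var lC fl _; apply/eqP => /lit_var_eq [El|El].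
  - by rewrite El eqxx in lx.
  - by rewrite El eqxx in lxc.
Qed.

Lemma DP_sole_minimal G' : G' `<` DP x.1 G -> satisfiable G'.
Proof.
move=> ltG'; have /fsubsetP subG' := fproper_sub ltG'.
move: ltG'; rewrite fproperE => /andP [_ /fsubsetPn [E ED EG']].
suff [f satf] : exists f, forall C, C \in DP x.1 G -> C != E -> sat_clause f C.
  by exists f => C CG'; apply: satf (subG' _ CG') _; apply: contraNneq EG' => <-.
case/(DP_sole_inv (proj1 MG) C0x): ED => [[EG Ex]|[D [DG xD] [-> _]]].
- have [f [satf _]] := MU_critical MG EG.
  have ne C : C \in G -> x.1 \in vars_of C -> C != E by move=> _ Cx; apply: contraNneq Ex => <-.
  exists f => C /(DP_sole_inv (proj1 MG) C0x) [[CG _]|[D [DG xD] [-> _]]] CE; first exact: satf.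
  have C0v : x.1 \in vars_of C0 by apply/vars_ofP; left.
  have Dx : x.1 \in vars_of D by apply/vars_ofP; right.
  exact: sat_res (cG C0G) (cG DG) xC0 xD (satf _ C0G (ne _ C0G C0v)) (satf _ DG (ne _ DG Dx)).
- have [f [satf falseR fx]] := critical_falsifies_res DG xD.
  exists f => C /(DP_sole_inv (proj1 MG) C0x) [[CG Cx] _|[D' [D'G xD'] [-> _]] RD].
    by apply: satf CG _; apply: contraNneq Cx => ->; apply/vars_ofP; right.
  have D'D : D' != D by apply/eqP => eD; rewrite eD eqxx in RD.
  exact: (sat_res_r C0 (cG D'G) xD' fx (satf _ D'G D'D)).
Qed.

Lemma MU_DP_sole : MU (DP x.1 G).
Proof.
split; first exact: DP_clause_set (proj1 MG).
by split; [exact: DP_sole_unsat | exact: DP_sole_minimal].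
Qed.

Lemma ldeg_sole : ldeg G x = 1.
Proof.
apply/eqP/cardfs1P; exists C0; apply/fsetP => C; rewrite !inE.
by apply/andP/eqP => [[CG xC]|->]; [exact: C0_uniq|].
Qed.

Lemma ldeg_with_sole z : ldeg_with G z x = (z \in C0).
Proof.
rewrite /ldeg_with; case: (boolP (z \in C0)) => zC0.
  apply/eqP/cardfs1P; exists C0; apply/fsetP => C; rewrite !inE.
  by apply/and3P/eqP => [[CG _ xC]|->]; [exact: C0_uniq|].
apply/eqP; rewrite cardfs_eq0; apply/eqP/fsetP => C; rewrite !inE.
by apply/and3P => -[CG zC /(C0_uniq CG) EC]; rewrite -EC zC in zC0.
Qed.

Lemma ldeg_DP_sole z : z.1 != x.1 ->
  ldeg (DP x.1 G) z =
  ldeg_off G x.1 z + (if z \in C0 then ldeg G (compl x) else ldeg_with G z (compl x)).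
Proof.
move=> zx; pose Dom := [fset D in G | (compl x \in D) && (z \in res x C0 D)].
have -> : ldeg (DP x.1 G) z = #|` [fset C in G | (z \in C) && (x.1 \notin vars_of C)]
                                   `|` [fset res x C0 D | D in Dom]|.
  congr (#|` _|); apply/fsetP => E; rewrite mem_fset_in in_fsetU; apply/andP/orP.
  - case=> /(DP_sole_inv (proj1 MG) C0x) [[EG Ex]|[D [DG xD] [-> _]]] zE.
      by left; rewrite mem_fset_in EG zE.
    by right; apply/imfsetP; exists D; rewrite // mem_fset_in DG xD.
  - case=> [|/imfsetP [D]]; first by rewrite mem_fset_in => /and3P [EG zE Ex]; rewrite DP_kept.
    by rewrite mem_fset_in => /and3P [DG xD zR] ->; rewrite res_sole_DP.
rewrite cardfsU_disjoint; last first.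
  apply/fdisjointP => E; rewrite mem_fset_in => /and3P [EG _ _]; apply/imfsetP => -[D].
  by rewrite mem_fset_in => /and3P [DG xD _] ED; move: (res_sole_notin DG xD); rewrite -ED EG.
rewrite [#|` [fset _ | D in Dom]|]card_in_imfset /=; last first.
  move=> D' D; rewrite !mem_fset_in => /and3P [D'G xD' _] /and3P [DG xD _].
  exact: res_sole_inj.
congr (_ + _); rewrite /ldeg /ldeg_with /Dom; case: ifP => zC0; congr (#|` _|); apply/fsetP => D.
  by rewrite !mem_fset_in mem_res_var // zC0 /= andbT.
by rewrite !mem_fset_in mem_res_var // zC0 /= [(z \in D) && _]andbC.
Qed.

Lemma ldeg_sole_split z : z.1 != x.1 ->
  ldeg G z = ldeg_off G x.1 z + (z \in C0) + ldeg_with G z (compl x).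
Proof. by move=> zx; rewrite (ldeg_split x z (proj1 MG)) ldeg_with_sole. Qed.

Lemma ldeg_DP_notin z : z \notin C0 -> z.1 != x.1 -> ldeg (DP x.1 G) z = ldeg G z.
Proof.
by move=> /negbTE zC0 zx; rewrite (ldeg_DP_sole zx) (ldeg_sole_split zx) zC0 addn0.
Qed.

Lemma ldeg_DP_in z : z \in C0 -> z.1 != x.1 -> ldeg G (compl x) <= ldeg (DP x.1 G) z.
Proof. by move=> zC0 zx; rewrite ldeg_DP_sole // zC0 leq_addl. Qed.

Lemma ldeg_le_DP z : z.1 != x.1 -> ldeg G z <= (ldeg (DP x.1 G) z).+1.
Proof.
move=> zx; rewrite (ldeg_DP_sole zx) (ldeg_sole_split zx).
have := ldeg_with_le G z (compl x); case: (z \in C0) => /=; lia.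
Qed.

Lemma ldeg_DP_le z : ldeg G (compl x) = 1 -> z.1 != x.1 -> ldeg (DP x.1 G) z <= ldeg G z.
Proof.
by move=> mx zx; rewrite (ldeg_DP_sole zx) (ldeg_sole_split zx) mx; case: (z \in C0) => /=; lia.
Qed.

Lemma ldeg_DP_eq1 z : ldeg G (compl x) = 1 -> z.1 != x.1 -> ldeg G z = 1 ->
  ldeg (DP x.1 G) z = 1.
Proof.
by move=> mx zx; rewrite (ldeg_DP_sole zx) (ldeg_sole_split zx) mx; case: (z \in C0) => /=; lia.
Qed.

Lemma ldeg_DP_drop z : ldeg G (compl x) = 1 -> z.1 != x.1 ->
  ldeg (DP x.1 G) z = 1 -> ldeg G z = 2 -> z \in C0 /\ 0 < ldeg_with G z (compl x).
Proof.
move=> mx zx; rewrite (ldeg_DP_sole zx) (ldeg_sole_split zx) mx.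
by case: (z \in C0) => /=; lia.
Qed.

End SoleClause.

Lemma vdeg_lit (H : cls) z : vdeg H z.1 = ldeg H z + ldeg H (compl z).
Proof. by case: z => v [] //=; rewrite /vdeg addnC. Qed.

Lemma vdeg_ldeg1 (H : cls) z : ldeg H z = 1 -> vdeg H z.1 - 1 = ldeg H (compl z).
Proof. by rewrite vdeg_lit => ->; rewrite add1n subn1. Qed.

Lemma singularE (H : cls) z : singular H z.1 = (minn (ldeg H z) (ldeg H (compl z)) == 1).
Proof. by case: z => v [] //=; rewrite /singular minnC. Qed.

Lemma singular_ldeg1 (H : cls) z : MU H -> ldeg H z = 1 -> singular H z.1.
Proof.
move=> MH lz; have := MU_no_pure MH (ltac:(by rewrite lz) : 0 < ldeg H z).
by rewrite singularE lz; case: (ldeg H (compl z)) => [|[|k]].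
Qed.

Lemma singular_lit (H : cls) v : singular H v -> exists2 z, z.1 = v & ldeg H z = 1.
Proof.
rewrite -[v]/((pos v).1) singularE /minn; case: ltnP => _ /eqP E.
- by exists (pos v).
- by exists (compl (pos v)).
Qed.

Lemma ldeg_DP_var (H : cls) v z : is_clause_set H -> z.1 = v -> ldeg (DP v H) z = 0.
Proof.
move=> cH zv; apply/eqP; rewrite cardfs_eq0; apply/eqP/fsetP => C; rewrite mem_fset_in inE.
apply/andP => -[/(DP_novar cH)]; rewrite -zv => /negP Cz zC.
by apply: Cz; apply/vars_ofP; left.
Qed.

Lemma not_singular_DP (H : cls) v : is_clause_set H -> ~~ singular (DP v H) v.
Proof. by move=> cH; rewrite /singular (@ldeg_DP_var H v (pos v)) ?min0n. Qed.

Lemma MU_DP (G : cls) v : MU G -> singular G v -> MU (DP v G).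
Proof.
by move=> MG /singular_lit [x <- /ldeg_eq1 [C0 /(MU_DP_sole MG)]].
Qed.

(** * Commutation of singular DP-reduction *)

Lemma neq_var_lits (q y : lit) : q.1 != y.1 ->
  [/\ (q == y) = false, (q == compl y) = false, (compl q == y) = false &
      (compl q == compl y) = false].
Proof.
move=> qy; have [h1 h2] := var_neq_lit qy.
by rewrite (inj_eq compl_inj) (can2_eq complK complK) h1 h2.
Qed.

Ltac lit_simpl :=
  repeat match goal with
  | H : is_true (?a != ?b) |- context [?a == ?b] => rewrite (negbTE H)
  | H : is_true (?a != ?b) |- context [?b == ?a] => rewrite [b == a]eq_sym (negbTE H)
  | H : (?a == ?b) = false |- context [?a == ?b] => rewrite H
  | H : (?a == ?b) = false |- context [?b == ?a] => rewrite [b == a]eq_sym H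
  | H : (?a \in ?S) = false |- context [?a \in ?S] => rewrite H
  | H : is_true (?a \in ?S) |- context [?a \in ?S] => rewrite H
  | |- context [?a == ?a] => rewrite eqxx
  | |- context [compl ?a == ?a] => rewrite compl_neq
  | |- context [?a == compl ?a] => rewrite neq_compl
  end.

Ltac lit_brute l q y :=
  rewrite /res ?inE;
  case: (eqVneq l q) => [->|?]; [|case: (eqVneq l (compl q)) => [->|?];
    [|case: (eqVneq l y) => [->|?]; [|case: (eqVneq l (compl y)) => [->|?]]]];
  lit_simpl; rewrite /=;
  repeat match goal with |- context [?a \in ?S] => case: (a \in S) end; done.

Section Commute.

Variables (H : cls) (y : lit) (C : clause).
Hypotheses (cH : is_clause_set H) (Cy : sole_clause H y C).

Lemma DP_comm_kept_res q P D : q.1 != y.1 -> P \in H -> y.1 \notin vars_of P -> q \in P ->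
  D \in H -> compl y \in D -> is_clause (res y C D) -> compl q \in res y C D ->
  is_clause (res q P (res y C D)) -> res q P (res y C D) \in DP y.1 (DP q.1 H).
Proof.
move=> qy PH Py qP DH yD cQ qQ cR; have [CH yC _] := Cy.
have [qy1 qy2 qy3 qy4] := neq_var_lits qy.
have [yP yP'] : (y \in P) = false /\ (compl y \in P) = false.
  by split; apply/negP => yP; case/negP: Py; apply/vars_ofP; [left|right].
have /negbTE qQ' : q \notin res y C D by rewrite -[q]complK; apply: (is_clauseP _ cQ).
have [qC' qD'] : (q \in C) = false /\ (q \in D) = false.
  by move: qQ'; rewrite /res !inE qy1 qy2 /= => /negbT/norP [/negbTE -> /negbTE ->].
(* [P] is resolved into each parent of the [y]-resolvent that contains [compl q]. *)
pose pull E := if compl q \in E then res q P E else E.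
have yC' := clause_compl (elimT (is_clause_setP H) cH C CH) yC.
have yD' : (y \in D) = false.
  by rewrite -[y]complK clause_compl // (elimT (is_clause_setP H) cH).
have eR : res q P (res y C D) = res y (pull C) (pull D).
  apply/fsetP => l; rewrite /pull; move: qQ; rewrite /res !inE qy3 qy4 /=.
  case: ifP => qC; case: ifP => qD //= _; lit_brute l q y.
have Rb : y.1 \notin vars_of (res q P (res y C D)) := novar_res q Py (res_novar y C D).
have pullP E yE : E \in H -> yE \in E -> yE.1 = y.1 -> (q \in E) = false ->
    res q P E `<=` yE |` res q P (res y C D) -> pull E \in DP q.1 H /\ yE \in pull E.
  move=> EH yE_E yEy qE sub; rewrite /pull; case: ifP => qE'; split => //.
  - apply: DP_res cH PH EH qP qE' _; apply: clause_sub sub _.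
    by apply: clause_fsetU1 cR _; rewrite yEy.
  - have yq : yE.1 != q.1 by rewrite yEy eq_sym.
    by have [h1 h2] := var_neq_lit yq; rewrite /res !inE h1 h2 yE_E orbT.
  - by apply: DP_kept EH _; apply/vars_ofP; rewrite qE qE'; case.
have [pC yPC] : pull C \in DP q.1 H /\ y \in pull C.
  by apply: pullP => //; apply/fsubsetP => l; apply/implyP; lit_brute l q y.
have [pD yPD] : pull D \in DP q.1 H /\ compl y \in pull D.
  by apply: pullP => //; apply/fsubsetP => l; apply/implyP; lit_brute l q y.
by rewrite eR; apply: DP_res (DP_clause_set _ cH) pC pD yPC yPD _; rewrite -eR.
Qed.

Lemma DP_comm_res_res q D1 D2 : q.1 != y.1 ->
  D1 \in H -> compl y \in D1 -> is_clause (res y C D1) -> q \in res y C D1 ->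
  D2 \in H -> compl y \in D2 -> is_clause (res y C D2) -> compl q \in res y C D2 ->
  is_clause (res q (res y C D1) (res y C D2)) ->
  res q (res y C D1) (res y C D2) \in DP y.1 (DP q.1 H).
Proof.
move=> qy D1H yD1 cQ1 qQ1 D2H yD2 cQ2 qQ2 cR; have [CH yC _] := Cy.
have [qy1 qy2 qy3 qy4] := neq_var_lits qy.
have cH' := elimT (is_clause_setP H) cH.
have yC' := clause_compl (cH' C CH) yC.
have [yD1' yD2'] : (y \in D1) = false /\ (y \in D2) = false.
  by split; rewrite -[y]complK clause_compl ?cH'.
have [qC qC'] : (q \in C) = false /\ (compl q \in C) = false.
  split; apply/negP => qC.
  - by move: (is_clauseP _ cQ2 _ qQ2); rewrite complK /res !inE qy1 qy2 qC.
  - by move: (is_clauseP _ cQ1 _ qQ1); rewrite /res !inE qy3 qy4 qC.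
have qD1 : q \in D1 by move: qQ1; rewrite /res !inE qy1 qy2 qC.
have qD2 : compl q \in D2 by move: qQ2; rewrite /res !inE qy3 qy4 qC'.
have eR : res q (res y C D1) (res y C D2) = res y C (res q D1 D2).
  by apply/fsetP => l; lit_brute l q y.
rewrite eR; apply: DP_res (DP_clause_set _ cH) _ _ yC _ _; last by rewrite -eR.
- by apply: DP_kept CH _; apply/vars_ofP; rewrite qC qC'; case.
- apply: DP_res cH D1H D2H qD1 qD2 _; apply: (@clause_sub _ (compl y |` res y C (res q D1 D2))).
    by apply/fsubsetP => l; apply/implyP; lit_brute l q y.
  apply: (@clause_fsetU1 _ (compl y)) (@res_novar y C (res q D1 D2)).
  by rewrite -eR.
- by rewrite /res !inE; lit_simpl.
Qed.

End Commute.

Lemma DP_comm_sub (H : cls) a b R : is_clause_set H -> a != b -> singular H b ->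
  R \in DP a (DP b H) -> R \in DP b (DP a H).
Proof.
move=> cH ab /singular_lit [y yb /ldeg_eq1 [C Cy]]; subst b; have [CH yC _] := Cy.
rewrite -[a]/((pos a).1) in ab *; move: (pos a) ab => p py.
have cHb := DP_clause_set y.1 cH; have cHa := DP_clause_set p.1 cH.
case/(DP_memE _ _ cHb) => [[/(DP_sole_inv cH Cy) RHb Ra]|[P [Q [[PHb QHb pP pQ cR] ->]]]].
  case: RHb => [[RH Rb]|[D [DH yD] [ER cR]]]; first exact: DP_kept (DP_kept RH Ra) Rb.
  rewrite ER in Ra cR *; apply: DP_res cHa _ _ yC yD cR.
  - exact: DP_kept CH (novar_resl Ra py).
  - exact: DP_kept DH (novar_resr Ra py).
case/(DP_sole_inv cH Cy): PHb => [[PH Pb]|[D1 [D1H yD1] [EP cP]]];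
  case/(DP_sole_inv cH Cy): QHb => [[QH Qb]|[D2 [D2H yD2] [EQ cQ]]]; subst.
- exact: DP_kept (DP_res cH PH QH pP pQ cR) (novar_res p Pb Qb).
- exact: (DP_comm_kept_res cH Cy py PH Pb pP D2H yD2 cQ pQ cR).
- rewrite -[p]complK in pP; rewrite -resC in cR *.
  exact: (@DP_comm_kept_res _ _ _ cH Cy (compl p) _ _ py QH Qb pQ D1H yD1 cP pP cR).
- exact: (DP_comm_res_res cH Cy py D1H yD1 cP pP D2H yD2 cQ pQ cR).
Qed.

Lemma DP_comm (H : cls) a b : is_clause_set H -> a != b -> singular H a -> singular H b ->
  DP a (DP b H) = DP b (DP a H).
Proof.
move=> cH ab sa sb; apply/fsetP => R; apply/idP/idP; first exact: DP_comm_sub.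
by apply: DP_comm_sub; rewrite // eq_sym.
Qed.

(** * Swapping two singular variables *)

Section Swap.

Variables (G : cls) (x y : lit) (C0 : clause).
Hypotheses (MG : MU G) (C0x : sole_clause G x C0) (ly : ldeg (DP x.1 G) y = 1).

(* With [a = x.1] and [b = y.1], the degrees m_i and m_(i+1) of the theorem are
   [ldeg G (compl x)] and [ldeg (DP x.1 G) (compl y)]. *)

Let lx : ldeg G x = 1 := ldeg_sole C0x.

Let yx : y.1 != x.1.
Proof. by apply/eqP => yx; move: ly; rewrite (ldeg_DP_var (proj1 MG) yx). Qed.

Let xy : x.1 != y.1.
Proof. by rewrite eq_sym. Qed.

Lemma swap_ge2 : 2 <= ldeg G (compl x) ->
  [/\ singular G y.1 /\ singular (DP y.1 G) x.1,
      vdeg G y.1 - 1 <= (ldeg (DP x.1 G) (compl y)).+1,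
      (ldeg G (compl x)).-1 <= vdeg (DP y.1 G) x.1 - 1,
      ldeg (DP x.1 G) (compl y) = 1 -> vdeg G y.1 - 1 = 1 &
      2 <= ldeg (DP x.1 G) (compl y) -> 2 <= vdeg (DP y.1 G) x.1 - 1].
Proof.
move=> mx; have yC0 : y \notin C0.
  by apply/negP => yC0; have := ldeg_DP_in MG C0x yC0 yx; rewrite ly; lia.
have ly0 : ldeg G y = 1 by rewrite -(ldeg_DP_notin MG C0x yC0 yx).
have [E0 E0y] := ldeg_eq1 ly0; have [E0G yE0 _] := E0y.
have xE0 : x \notin E0.
  by apply: contraNN yC0 => xE0; case: C0x => _ _ /(_ _ E0G xE0) <-.
have lx' : ldeg (DP y.1 G) x = 1 by rewrite (ldeg_DP_notin MG E0y xE0 xy).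
rewrite (vdeg_ldeg1 ly0) (vdeg_ldeg1 lx'); split.
- by split; [exact: singular_ldeg1 MG ly0 | exact: singular_ldeg1 (MU_DP_sole MG E0y) lx'].
- exact: @ldeg_le_DP _ _ _ MG C0x (compl y) yx.
- by have := @ldeg_le_DP _ _ _ MG E0y (compl x) xy; lia.
- move=> my; case: (boolP (compl y \in C0)) => yC0'.
    by have := ldeg_DP_in MG C0x yC0' yx; lia.
  by rewrite -(ldeg_DP_notin MG C0x yC0' yx).
- move=> my; case: (boolP (compl x \in E0)) => xE0'; last first.
    by rewrite (ldeg_DP_notin MG E0y xE0' xy).
  apply: leq_trans (ldeg_DP_in MG E0y xE0' xy); case: (boolP (compl y \in C0)) => yC0'.
    (* [C0] and [E0] would clash on both [x] and [y]. *)
    have yE0' : compl (compl y) \in E0 by rewrite complK.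
    by move: yx; rewrite -(clash_sole MG C0x E0G xE0' yC0' yE0') eqxx.
  by rewrite -(ldeg_DP_notin MG C0x yC0' yx).
Qed.

Lemma swap_one_one : ldeg G (compl x) = 1 -> ldeg (DP x.1 G) (compl y) = 1 -> y \notin C0 ->
  [/\ singular G y.1 /\ singular (DP y.1 G) x.1,
      vdeg (DP y.1 G) x.1 - 1 = 1 & vdeg G y.1 - 1 = 1 \/ vdeg G y.1 - 1 = 2].
Proof.
move=> mx my yC0; have ly0 : ldeg G y = 1 by rewrite -(ldeg_DP_notin MG C0x yC0 yx).
have [E0 E0y] := ldeg_eq1 ly0; have [E0G yE0 _] := E0y.
have my0 : 0 < ldeg G (compl y) by apply: MU_no_pure MG _; rewrite ly0.
have my2 : ldeg G (compl y) <= 2 by have := @ldeg_le_DP _ _ _ MG C0x (compl y) yx; lia.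
have lx' z : z.1 = x.1 -> ldeg G z = 1 -> ldeg (DP y.1 G) z = 1.
  move=> zx lz; have zy : z.1 != y.1 by rewrite zx.
  have [my1|my2'] : ldeg G (compl y) = 1 \/ ldeg G (compl y) = 2 by lia.
    exact: (ldeg_DP_eq1 MG E0y my1 zy lz).
  (* Now [compl y] lies in the sole clauses of [x] and of [compl x], so [E0] contains neither. *)
  suff zE0 : z \notin E0 by rewrite (ldeg_DP_notin MG E0y zE0 zy).
  have [yC0' /ldeg_with_gt0 [D DG /andP [yD xD]]] :=
    @ldeg_DP_drop _ _ _ MG C0x (compl y) mx yx my my2'.
  have [D0 [_ _ D0_uniq]] := ldeg_eq1 mx.
  apply/negP => zE0; case: (lit_var_eq zx) => Ez; rewrite Ez in zE0.
    by case: C0x => _ _ /(_ _ E0G zE0) EC0; rewrite -EC0 yE0 in yC0.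
  have ED : E0 = D by rewrite (D0_uniq _ E0G zE0) (D0_uniq _ DG xD).
  by rewrite -ED (clause_compl _ yE0) // (elimT (is_clause_setP _) (proj1 MG)) in yD.
have lxx := lx' x erefl lx; rewrite (vdeg_ldeg1 lxx) (vdeg_ldeg1 ly0); split.
- by split; [exact: singular_ldeg1 MG ly0 | exact: singular_ldeg1 (MU_DP_sole MG E0y) lxx].
- exact: lx'.
- lia.
Qed.

Lemma swap_one_ge2 : ldeg G (compl x) = 1 -> 2 <= ldeg (DP x.1 G) (compl y) ->
  (singular G y.1 -> singular (DP y.1 G) x.1) /\ 2 <= vdeg G y.1 - 1.
Proof.
move=> mx my; split.
  case/singular_lit => y0 y0y /ldeg_eq1 [E0 E0y0]; have [E0G y0E0 _] := E0y0.
  have MG' := MU_DP_sole MG E0y0; have xy0 : x.1 != y0.1 by rewrite y0y.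
  rewrite -y0y.
  case: (boolP (x \in E0)) => xE0.
    have xE0' : compl x \notin E0.
      by rewrite (clause_compl _ xE0) // (elimT (is_clause_setP _) (proj1 MG)).
    by apply: (@singular_ldeg1 _ (compl x) MG'); rewrite (ldeg_DP_notin MG E0y0 xE0' xy0).
  by apply: (singular_ldeg1 MG'); rewrite (ldeg_DP_notin MG E0y0 xE0 xy0).
rewrite vdeg_lit.
have := ldeg_DP_le MG C0x mx yx; have := @ldeg_DP_le _ _ _ MG C0x (compl y) mx yx; lia.
Qed.

End Swap.

Lemma swap_degrees (G : cls) a b : MU G -> singular G a -> singular (DP a G) b ->
  let m1 := vdeg G a - 1 in let m2 := vdeg (DP a G) b - 1 in
  let m1' := vdeg G b - 1 in let m2' := vdeg (DP b G) a - 1 in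
  (2 <= m1 -> [/\ singular G b /\ singular (DP b G) a, m1' <= m2.+1, m1.-1 <= m2',
                  m2 = 1 -> m1' = 1 & 2 <= m2 -> 2 <= m2']) /\
  (m1 = 1 ->
     (m2 = 1 -> [/\ singular G b /\ singular (DP b G) a, m2' = 1 & m1' = 1 \/ m1' = 2]) /\
     (2 <= m2 -> (singular G b -> singular (DP b G) a) /\ 2 <= m1')).
Proof.
move=> MG /singular_lit [x <- /ldeg_eq1 [C0 C0x]] /singular_lit [y <- ly] m1 m2 m1' m2'.
have -> : m1 = ldeg G (compl x) := vdeg_ldeg1 (ldeg_sole C0x).
have -> : m2 = ldeg (DP x.1 G) (compl y) := vdeg_ldeg1 ly.
split; first exact: (swap_ge2 MG C0x ly).
move=> mx; split; last exact: (swap_one_ge2 MG C0x ly mx).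
(* Both literals of [y.1] now have degree one in [DP x.1 G]; at most one of them is in [C0]. *)
move=> my; case: (boolP (y \in C0)) => yC0; last exact: (swap_one_one MG C0x ly mx my yC0).
have yC0' : compl y \notin C0.
  by case: C0x => C0G _ _; rewrite (clause_compl _ yC0) // (elimT (is_clause_setP _) (proj1 MG)).
by rewrite -[y]complK in ly; exact: (swap_one_one MG C0x my mx ly yC0').
Qed.

(** * Singular tuples *)

Lemma singular_tuple_cons F a t :
  singular_tuple F (a :: t) <-> singular F a /\ singular_tuple (DP a F) t.
Proof.
split => [st|[sa st] [|i] hi //]; last exact: st.
by split=> [|i hi]; [exact: (st 0) | exact: (st i.+1)].
Qed.

Lemma singular_tuple_cat F s t :
  singular_tuple F (s ++ t) <-> singular_tuple F s /\ singular_tuple (DPs s F) t.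
Proof.
elim: s F => [|a s IH] F /=; first by split=> [st|[]] //; split=> // -[].
by rewrite !singular_tuple_cons IH; split=> [[sa [ss st]]|[[sa ss] st]].
Qed.

Lemma singular_tuple_pair F P a b T : singular_tuple F (P ++ a :: b :: T) ->
  [/\ singular_tuple F P, singular (DPs P F) a & singular (DP a (DPs P F)) b].
Proof. by rewrite singular_tuple_cat !singular_tuple_cons => -[? [? [? _]]]. Qed.

Lemma MU_DPs F s : MU F -> singular_tuple F s -> MU (DPs s F).
Proof.
elim: s F => [|a s IH] F //= MF /singular_tuple_cons [sa ss].
exact: IH (MU_DP MF sa) ss.
Qed.

Lemma sdeg_cat F s t j : sdeg F (s ++ t) (size s + j) = sdeg (DPs s F) t j.
Proof. by elim: s F => [|a s IH] F //=; rewrite addSn -IH. Qed.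

Lemma sdeg_cat_lt F s t j : j < size s -> sdeg F (s ++ t) j = sdeg F s j.
Proof. by move=> js; rewrite /sdeg take_cat nth_cat js. Qed.

Lemma split_at2 (s : seq var) i : i.+1 < size s ->
  exists P a b T, s = P ++ a :: b :: T /\ size P = i.
Proof.
move=> hi; exists (take i s), (nth 0 s i), (nth 0 s i.+1), (drop i.+2 s).
rewrite size_take ltnW // -[in LHS](cat_take_drop i s) (drop_nth 0 (ltnW hi)).
by rewrite (drop_nth 0 hi).
Qed.

Lemma permute_swap (P T : seq nat) a b :
  permute (swap_idx (size P)) (P ++ a :: b :: T) = P ++ b :: a :: T.
Proof.
apply: (@eq_from_nth _ 0); first by rewrite size_mkseq !size_cat.
rewrite size_mkseq => j hj; rewrite nth_mkseq // /swap_idx !nth_cat.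
have [->|ji] := eqVneq j (size P); first by rewrite ltnn subnn ltnNge leqnSn subSnn.
have [->|ji1] := eqVneq j (size P).+1; first by rewrite ltnn subnn ltnNge leqnSn subSnn.
by case: ltnP => // hP; have [k ->] : exists k, j - size P = k.+2 by exists (j - size P - 2); lia.
Qed.

Section SwapTuple.

Variables (F : cls) (P T : seq var) (a b : var).
Let G := DPs P F.
Hypothesis (comm : DP a (DP b G) = DP b (DP a G)).

Lemma singular_tuple_swap : singular_tuple F (P ++ a :: b :: T) ->
  singular_tuple F (P ++ b :: a :: T) <-> singular G b /\ singular (DP b G) a.
Proof.
rewrite !singular_tuple_cat !singular_tuple_cons => -[sP [_ [_ sT]]].
by split=> [[_ [sb [sa _]]] | [sb sa]] //; rewrite comm.
Qed.

Lemma sdeg_swap j : j != size P -> j != (size P).+1 ->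
  sdeg F (P ++ b :: a :: T) j = sdeg F (P ++ a :: b :: T) j.
Proof.
move=> ji ji1; case: (ltnP j (size P)) => hj; first by rewrite !sdeg_cat_lt.
have [k ->] : exists k, j = size P + k.+2 by exists (j - size P - 2); lia.
by rewrite !sdeg_cat /= /sdeg /= comm.
Qed.

End SwapTuple.

Theorem theorem41 (F : cls) (s : seq var) (i : nat) :
  MU F -> singular_tuple F s -> 2 <= size s -> i.+1 < size s ->
  let n := size s in
  let s' := permute (swap_idx i) s in
  let m := sdeg F s in
  let m' := sdeg F s' in
  (* 1 *)
  (sing_preserving F s (swap_idx i) ->
     forall j, j < n -> j != i -> j != i.+1 -> m' j = m j) /\
  (* 2 *)
  (2 <= m i ->
     [/\ sing_preserving F s (swap_idx i),
         m' i <= (m i.+1).+1,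
         (m i).-1 <= m' i.+1,
         (m i.+1 = 1 -> m' i = 1) &
         (2 <= m i.+1 -> 2 <= m' i.+1)]) /\
  (* 3 *)
  (m i = 1 ->
     (m i.+1 = 1 ->
        [/\ sing_preserving F s (swap_idx i), m' i.+1 = 1 & (m' i = 1 \/ m' i = 2)]) /\
     (2 <= m i.+1 ->
        (sing_preserving F s (swap_idx i) <->
           singular (DPs (take i s) F) (nth 0 s i.+1)) /\
        (sing_preserving F s (swap_idx i) -> 2 <= m' i))).
Proof.
move=> MF st _ /split_at2 [P [a [b [T [sE <-]]]]]; subst s.
have -> : nth 0 (P ++ a :: b :: T) (size P).+1 = b by rewrite nth_cat ltnNge leqnSn subSnn.
rewrite /sing_preserving permute_swap take_size_cat //.
have [sP sa sb] := singular_tuple_pair st.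
set G := DPs P F; have MG : MU G := MU_DPs MF sP.
have ab : a != b by apply: contraTneq sb => <-; exact: not_singular_DP (proj1 MG).
have comm : singular G b -> DP a (DP b G) = DP b (DP a G).
  by move=> sGb; exact: (DP_comm (proj1 MG) ab sa sGb).
have spE : singular G b ->
    singular_tuple F (P ++ b :: a :: T) <-> singular G b /\ singular (DP b G) a.
  by move=> sGb; apply: singular_tuple_swap (comm sGb) st.
have sdeg0 c d : sdeg F (P ++ c :: d :: T) (size P) = vdeg G c - 1.
  by rewrite -[size P]addn0 sdeg_cat.
have sdeg1 c d : sdeg F (P ++ c :: d :: T) (size P).+1 = vdeg (DP c G) d - 1.
  by rewrite -addn1 sdeg_cat.
rewrite !sdeg0 !sdeg1; have [C2 C3] := swap_degrees MG sa sb; split; [|split].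
- by move=> /singular_tuple_pair [_ sGb _] j _; exact: (sdeg_swap T (comm sGb) (j := j)).
- by move=> /C2 [[sGb sGa] ? ? ? ?]; split => //; apply/(spE sGb).
- move=> /C3 [C31 C32]; split.
    by move=> /C31 [[sGb sGa] ? ?]; split => //; apply/(spE sGb).
  move=> /C32 [sGa ?]; split=> //; split=> [/singular_tuple_pair [] //| sGb].
  by apply/(spE sGb); split => //; exact: sGa.
Qed.
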